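(* Let $q$ be a prime power, $\mathbb{L}=\mathrm{GF}(q^m)$, $n\mid q^m-1$, and $F_n=\{f\in\mathbb{L}^n : f_{qi\bmod n}=f_i^q\ \forall i\in\mathbb{Z}/n\mathbb{Z}\}$. Let $B_m(n)$ be the number of $q$-cyclotomic classes modulo $n$ having length $m$. Then the covering radius of $F_n\subseteq\mathbb{L}^n$ in the symbol Hamming metric is $$\rho(F_n)=n-B_m(n).$$ For $n=q^m-1$, $B_m(n)=\frac1m\sum_{r\mid m}\mu(m/r)(q^r-1)$.
   Context: The symbol Hamming distance between $x,y\in\mathbb{L}^n$ is $|\{i : x_i\ne y_i\}|$; the covering radius of a code $\mathcal{C}\subseteq\mathbb{L}^n$ is $\max_{x\in\mathbb{L}^n}\min_{c\in\mathcal{C}}d(x,c)$. The $q$-cyclotomic class of $s\in\mathbb{Z}/n\mathbb{Z}$ is $\{s,qs,q^2s,\ldots\}\bmod n$. $\mu$ is the Möbius function. *)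

From HB Require Import structures.
From mathcomp Require Import all_boot all_order all_algebra all_field.
Set Implicit Arguments. Unset Strict Implicit. Unset Printing Implicit Defensive.
Import Order.TTheory GRing.Theory Num.Theory.

(* Moebius function: mu(0) := 0 (unused); mu(n) = (-1)^(#primes) if n is
   squarefree, 0 otherwise. *)
Definition mobius (n : nat) : int :=
  if n == 0%N then 0%R
  else if all (fun p => logn p n == 1%N) (primes n)
       then ((-1) ^+ size (primes n))%R else 0%R.

Definition hamming (L : finType) (n : nat) (x y : {ffun 'I_n -> L}) : nat :=
  #|[set i : 'I_n | x i != y i]|.

(* Covering radius: max_x min_{c in C} d(x,c).  The min is computed with
   default value n (>= every Hamming distance), so it is the true minimum
   whenever C is nonempty. *)
Definition covering_radius (L : finType) (n : nat) (C : {set {ffun 'I_n -> L}}) : nat :=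
  \max_(x : {ffun 'I_n -> L}) \big[minn/n]_(c in C) hamming x c.

Definition Fcode (L : finFieldType) (q n : nat) : {set {ffun 'I_n -> L}} :=
  [set f : {ffun 'I_n -> L} |
    [forall i : 'I_n, forall j : 'I_n,
       (nat_of_ord j == (q * i) %% n)%N ==> (f j == f i ^+ q)%R]].

(* q-cyclotomic class of s mod n: { s q^k mod n : k >= 0 }.  Exponents
   k < n suffice, since the forward orbit of a map on n points is reached
   within its first n iterates. *)
Definition cyclo_class (q n : nat) (s : 'I_n) : {set 'I_n} :=
  [set i : 'I_n | [exists k : 'I_n, nat_of_ord i == (s * q ^ k) %% n]].

Definition Bm (q m n : nat) : nat :=
  #|[set C in [set cyclo_class q s | s : 'I_n] | #|C| == m]|.

(* Multiplication by q permutes Z/nZ (its m-th iterate is the identity because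
   n divides q^m - 1) and its cycles are the q-cyclotomic classes. A codeword
   is determined on each class by its value at one point, since f(q i) = f(i)^q.
   Any word x is therefore within distance n - B_m(n) of the codeword
   that copies x at one point of each class of length m, propagates that value
   by Frobenius, and vanishes elsewhere. Conversely, if a generates GF(q^m)^*
   then a^(q^d) = a forces m | d, so a codeword can take the value a only on
   classes of length m and at most once on each: the constant word a is at
   distance at least n - B_m(n) from F_n.
   For n = q^m - 1 the points whose class length divides r are the solutions of
   (q^r - 1) i = 0 in Z/nZ, so sum_(d | r) d B_d(n) = q^r - 1, and Moebius
   inversion gives m B_m(n). *)

From HB Require Import structures.
From mathcomp Require Import all_boot all_order all_algebra all_field.
From mathcomp Require Import cyclic zify.
Set Implicit Arguments. Unset Strict Implicit. Unset Printing Implicit Defensive.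
Import Order.TTheory GRing.Theory Num.Theory.

Lemma mobius_primeM p e : prime p -> 0 < e -> ~~ (p %| e) ->
  mobius (p * e) = (- mobius e)%R.
Proof.
move=> p_pr e_gt0 p_ndvd_e; have p_gt0 := prime_gt0 p_pr.
have pe_gt0 : 0 < p * e by rewrite muln_gt0 p_gt0.
have primes_pe : perm_eq (primes (p * e)) (p :: primes e).
  apply: uniq_perm; rewrite /= ?primes_uniq ?mem_primes ?(negbTE p_ndvd_e) ?andbF //.
  by move=> r; rewrite primesM // primes_prime // !inE.
rewrite /mobius !eqn0Ngt pe_gt0 e_gt0 /= (perm_size primes_pe) (perm_all _ primes_pe) /=.
rewrite lognM // logn_prime // eqxx logn_coprime ?prime_coprime //=.
rewrite (@eq_in_all _ _ (fun r => logn r e == 1%N)); last first.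
  move=> r; rewrite mem_primes => /and3P[_ _ r_dvd_e] /=.
  rewrite lognM // logn_prime //; case: (eqVneq r p) => [r_eq_p | _] //.
  by rewrite -r_eq_p r_dvd_e in p_ndvd_e.
by case: all; rewrite ?oppr0 // exprS mulN1r.
Qed.

Lemma mobius_primeM_dvd p e : prime p -> 0 < e -> p %| e ->
  mobius (p * e) = 0%R.
Proof.
move=> p_pr e_gt0 p_dvd_e; have p_gt0 := prime_gt0 p_pr.
have pe_gt0 : 0 < p * e by rewrite muln_gt0 p_gt0.
rewrite /mobius eqn0Ngt pe_gt0 /=; case: allP => // /(_ p) /=.
rewrite mem_primes p_pr pe_gt0 dvdn_mulr // lognM // logn_prime // eqxx => /(_ isT).
have : 0 < logn p e by rewrite logn_gt0 mem_primes p_pr e_gt0 p_dvd_e.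
by case: (logn p e).
Qed.

Lemma sum_mobius_divisors k : 0 < k ->
  (\sum_(d <- divisors k) mobius d = (k == 1%N)%:R)%R.
Proof.
move=> k_gt0; have [-> | k_neq1] := eqVneq k 1%N; first by rewrite big_seq1.
have k_gt1 : 1 < k by rewrite ltn_neqAle eq_sym k_neq1.
have [p p_pr p_dvd_k] : exists2 p, prime p & p %| k.
  by exists (pdiv k); rewrite ?pdiv_prime ?pdiv_dvd.
have p_gt0 := prime_gt0 p_pr.
have [k' k_def] : exists k', k = p * k'.
  by case/dvdnP: p_dvd_k => k' ->; exists k'; rewrite mulnC.
have k'_gt0 : 0 < k' by move: k_gt0; rewrite k_def muln_gt0 => /andP[].
have divs_p : perm_eq [seq d <- divisors k | p %| d] [seq p * e | e <- divisors k'].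
  apply: uniq_perm; rewrite ?filter_uniq ?divisors_uniq //.
    by rewrite map_inj_uniq ?divisors_uniq // => x y /eqP; rewrite eqn_pmul2l // => /eqP.
  move=> d; rewrite mem_filter -dvdn_divisors //; apply/andP/mapP => [[] | [e]].
    case/dvdnP=> e -> ; rewrite k_def mulnC dvdn_pmul2l // => e_dvd_k'.
    by exists e; [rewrite -dvdn_divisors | rewrite mulnC].
  rewrite -dvdn_divisors // => e_dvd_k' ->.
  by rewrite dvdn_mulr // k_def dvdn_pmul2l.
have sum_np : (\sum_(d <- divisors k | ~~ (p %| d)%N) mobius d =
                \sum_(d <- divisors k' | ~~ (p %| d)%N) mobius d)%R.
  rewrite -[LHS]big_filter -[RHS]big_filter; apply/perm_big/uniq_perm.
  - by rewrite filter_uniq ?divisors_uniq.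
  - by rewrite filter_uniq ?divisors_uniq.
  move=> d; rewrite !mem_filter -!dvdn_divisors //; apply: andb_id2l => p_ndvd_d.
  by rewrite k_def Gauss_dvdr // coprime_sym prime_coprime.
rewrite (bigID (dvdn p)) /= sum_np -big_filter (perm_big _ divs_p) big_map.
rewrite (bigID (dvdn p)) /= big_seq_cond big1 => [|e]; last first.
  rewrite -dvdn_divisors // => /andP[e_dvd_k' p_dvd_e].
  exact: mobius_primeM_dvd (dvdn_gt0 k'_gt0 e_dvd_k') p_dvd_e.
rewrite add0r -big_split /= big_seq_cond big1 // => e.
rewrite -dvdn_divisors // => /andP[e_dvd_k' p_ndvd_e].
by rewrite mobius_primeM ?addNr // (dvdn_gt0 k'_gt0 e_dvd_k').
Qed.

Lemma perm_divisors_cofactor [k] : 0 < k ->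
  perm_eq [seq k %/ e | e <- divisors k] (divisors k).
Proof.
move=> k_gt0; apply: uniq_perm; rewrite ?divisors_uniq //.
  rewrite map_inj_in_uniq ?divisors_uniq // => x y.
  rewrite -!dvdn_divisors // => x_dvd_k y_dvd_k eq_xy.
  by rewrite -[x](mulKn _ k_gt0) -[y](mulKn _ k_gt0) -!divnA // eq_xy.
move=> d; rewrite -dvdn_divisors //; apply/mapP/idP => [[e e_in ->] | d_dvd_k].
  by apply: dvdn_div; rewrite dvdn_divisors.
by exists (k %/ d); rewrite ?divnA ?mulKn // -dvdn_divisors // dvdn_div.
Qed.

Lemma perm_divisors_dvdn [k r] : 0 < k -> r %| k ->
  perm_eq (divisors r) [seq d <- divisors k | d %| r].
Proof.
move=> k_gt0 r_dvd_k; have r_gt0 := dvdn_gt0 k_gt0 r_dvd_k.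
apply: uniq_perm; rewrite ?filter_uniq ?divisors_uniq //.
move=> d; rewrite mem_filter -!dvdn_divisors //.
by apply/idP/andP => [d_dvd_r | []//]; split; last exact: dvdn_trans r_dvd_k.
Qed.

Lemma sum_mobius_cofactor m d : 0 < m -> d %| m ->
  (\sum_(r <- divisors m | (d %| r)%N) mobius (m %/ r) = (d == m)%:R :> int)%R.
Proof.
move=> m_gt0 d_dvd_m; have d_gt0 := dvdn_gt0 m_gt0 d_dvd_m.
have md_gt0 : 0 < m %/ d by rewrite divn_gt0 // dvdn_leq.
have multiples_d :
    perm_eq [seq r <- divisors m | d %| r] [seq d * e | e <- divisors (m %/ d)].
  apply: uniq_perm; rewrite ?filter_uniq ?divisors_uniq //.
    by rewrite map_inj_uniq ?divisors_uniq // => x y /eqP; rewrite eqn_pmul2l // => /eqP.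
  move=> r; rewrite mem_filter -dvdn_divisors //; apply/andP/mapP => [[] | [e]].
    case/dvdnP=> e ->; rewrite -{1}(divnK d_dvd_m) dvdn_pmul2r // => e_dvd.
    by exists e; [rewrite -dvdn_divisors | rewrite mulnC].
  rewrite -dvdn_divisors // => e_dvd ->.
  by split; [exact: dvdn_mulr | rewrite -(divnK d_dvd_m) [d * e]mulnC dvdn_pmul2r].
rewrite -big_filter (perm_big _ multiples_d) big_map.
under eq_bigr do rewrite divnMA.
rewrite -(big_map (divn (m %/ d)) predT mobius) (perm_big _ (perm_divisors_cofactor md_gt0)).
by rewrite sum_mobius_divisors // -(eqn_pmul2r d_gt0) divnK // mul1n eq_sym.
Qed.

Lemma mobius_inversion (R : pzRingType) (g : nat -> R) m : 0 < m ->
  (\sum_(r <- divisors m) (mobius (m %/ r))%:~R * \sum_(d <- divisors r) g d = g m)%R.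
Proof.
move=> m_gt0.
transitivity (\sum_(r <- divisors m) \sum_(d <- divisors m | (d %| r)%N)
                (mobius (m %/ r))%:~R * g d)%R.
  apply: eq_big_seq => r; rewrite -dvdn_divisors // => r_dvd_m.
  by rewrite (perm_big _ (perm_divisors_dvdn m_gt0 r_dvd_m)) big_filter mulr_sumr.
rewrite (exchange_big_dep predT) //=.
under eq_bigr do rewrite -mulr_suml -mulrz_sumr.
rewrite (eq_big_seq (fun d => (d == m)%:R * g d))%R => [|d]; last first.
  by rewrite -dvdn_divisors // => d_dvd_m; rewrite sum_mobius_cofactor // mulrz_nat.
rewrite (bigD1_seq m) ?divisors_uniq -?dvdn_divisors //= eqxx mul1r.
rewrite big_seq_cond big1 ?addr0 // => d.
by case/andP=> _ /negbTE->; rewrite mul0r.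
Qed.

Lemma finField_prim_root (F : finFieldType) :
  exists z : F, (#|F|.-1).-primitive_root%R z.
Proof.
have card_gt0 : 0 < #|F| by apply: ltnW (card_finNzRing_gt1 F).
suff /hasP[z _ prim_z] : has (#|F|.-1).-primitive_root%R [seq x <- enum F | x != 0%R].
  by exists z.
  apply: has_prim_root.
  - by rewrite -ltnS prednK ?card_finNzRing_gt1.
  - apply/allP => x; rewrite mem_filter => /andP[x_neq0 _]; apply/unity_rootP.
    by apply: (mulIf x_neq0); rewrite mul1r -exprSr prednK ?expf_card.
  - by rewrite filter_uniq ?enum_uniq.
by rewrite size_filter -(cardC1 0%R) cardE size_filter -enumT.
Qed.

Section InjectiveOrbits.
Variables (T : finType) (f : T -> T).
Hypothesis f_inj : injective f.

Lemma iter_mod_order k x : iter k f x = iter (k %% order f x) f x.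
Proof.
rewrite {1}(divn_eq k (order f x)) addnC iterD; congr (iter _ f _).
by elim: (k %/ order f x) => // c IHc; rewrite mulSn iterD IHc iter_order.
Qed.

Lemma eq_iter_order a b x :
  (iter a f x == iter b f x) = (a == b %[mod order f x]).
Proof.
apply/eqP/eqP => [eq_ab | eq_mod]; last by rewrite iter_mod_order eq_mod -iter_mod_order.
rewrite -(findex_iter (ltn_pmod a (order_gt0 f x))) -iter_mod_order eq_ab.
by rewrite iter_mod_order findex_iter // ltn_pmod.
Qed.

Lemma order_dvdn_iter k x : (order f x %| k) = (iter k f x == x).
Proof. by rewrite /dvdn -[0%N](mod0n (order f x)) -eq_iter_order. Qed.

Lemma eq_order_fconnect x y : fconnect f x y -> order f x = order f y.
Proof.
by move=> xy; apply: eq_card => z; rewrite !inE (same_connect (fconnect_sym f_inj) xy).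
Qed.

Lemma order_f x : order f (f x) = order f x.
Proof. by apply/esym/eq_order_fconnect; apply: fconnect1. Qed.

Lemma froot_f x : froot f (f x) = froot f x.
Proof.
by apply/(fingraph.rootP (fconnect_sym f_inj)); rewrite fconnect_sym // fconnect1.
Qed.

Lemma card_order_set_froots k :
  #|order_set f k| = #|[set x | froots f x & order f x == k]| * k.
Proof.
rewrite -(@fcard_order_set _ _ f_inj k (order_set f k)) //; last first.
  by move=> x y /eqP <-; rewrite !inE order_f.
by congr (_ * _); apply: eq_card => x; rewrite !inE.
Qed.

End InjectiveOrbits.

Lemma sum_card_order_set (T : finType) (f : T -> T) r : 0 < r ->
  \sum_(d <- divisors r) #|order_set f d| = #|[pred x | order f x %| r]|.
Proof.
move=> r_gt0.
transitivity (\sum_(d <- divisors r) \sum_x (order f x == d) : nat).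
  apply: eq_bigr => d _; rewrite -sum1_card big_mkcond /=.
  by apply: eq_bigr => x _; rewrite inE; case: eqP.
rewrite exchange_big -sum1_card [RHS]big_mkcond; apply: eq_bigr => x _ /=.
transitivity (count_mem (order f x) (divisors r)).
  by rewrite -sum1_count [RHS]big_mkcond; apply: eq_bigr => d _; rewrite eq_sym.
by rewrite count_uniq_mem ?divisors_uniq // -dvdn_divisors // inE; case: (_ %| _).
Qed.

Lemma covering_radius_le (L : finType) n (C : {set {ffun 'I_n -> L}}) k :
  (forall x, exists2 c, c \in C & hamming x c <= k) -> covering_radius C <= k.
Proof.
move=> near; apply/bigmax_leqP => x _; have [c c_in le_k] := near x.
by apply: leq_trans le_k; have := bigmin_le_cond n (hamming x) c_in; rewrite minEnat.
Qed.

Lemma covering_radius_ge (L : finType) n (C : {set {ffun 'I_n -> L}}) x k :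
  k <= n -> (forall c, c \in C -> k <= hamming x c) -> k <= covering_radius C.
Proof.
move=> k_le_n far; apply: leq_trans _ (leq_bigmax x).
by elim/big_ind: _ => // u v k_le_u k_le_v; rewrite leq_min k_le_u.
Qed.

Lemma card_dvdn_ord n K Q : 0 < K -> n = K * Q -> #|[pred i : 'I_n | K %| i]| = Q.
Proof.
move=> K_gt0 n_def.
have mulK_lt (j : 'I_Q) : j * K < n by rewrite n_def mulnC ltn_pmul2l.
pose mulK (j : 'I_Q) : 'I_n := Ordinal (mulK_lt j).
have mulK_inj : injective mulK.
  by move=> j1 j2 /(congr1 val) /eqP; rewrite eqn_pmul2r // => /eqP /val_inj.
rewrite -[RHS](card_ord Q) -(card_imset predT mulK_inj).
apply: eq_card => i; rewrite !inE; apply/idP/imsetP => [K_dvd_i | [j _ ->]].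
  have i_div_lt : i %/ K < Q by rewrite ltn_divLR // mulnC -n_def.
  by exists (Ordinal i_div_lt) => //; apply: val_inj; rewrite /= divnK.
exact: dvdn_mull.
Qed.

Section MultiplicationByQ.
Variables (q n : nat).

Definition mulq (i : 'I_n) : 'I_n :=
  Ordinal (ltn_pmod (q * i) (leq_ltn_trans (leq0n i) (ltn_ord i))).

Lemma iter_mulq k i : iter k mulq i = i * q ^ k %% n :> nat.
Proof.
elim: k => [|k IHk] /=; first by rewrite expn0 muln1 modn_small.
by rewrite IHk modnMmr expnS mulnCA.
Qed.

Lemma cyclo_classE s : cyclo_class q s = [set i | fconnect mulq s i].
Proof.
apply/setP => i; rewrite !inE; apply/existsP/idP => [[k /eqP i_def] | s_to_i].
  by rewrite (_ : i = iter k mulq s) ?fconnect_iter //; apply: ord_inj; rewrite iter_mulq.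
have findex_lt : findex mulq s i < n.
  by rewrite (leq_trans (findex_max s_to_i)) // -{2}(card_ord n) max_card.
by exists (Ordinal findex_lt); rewrite -iter_mulq iter_findex.
Qed.

Lemma card_cyclo_class s : #|cyclo_class q s| = order mulq s.
Proof. by rewrite cyclo_classE cardsE. Qed.

Variable m : nat.
Hypotheses (q_gt1 : 1 < q) (m_gt0 : 0 < m) (n_dvd : n %| q ^ m - 1).

Lemma iter_mulq_m i : iter m mulq i = i.
Proof.
apply: ord_inj; have qm_gt0 : 0 < q ^ m by rewrite expn_gt0 ltnW.
case/dvdnP: n_dvd => c qm_def.
by rewrite iter_mulq -(subnK qm_gt0) qm_def addn1 mulnS mulnA addnC modnMDl modn_small.
Qed.

Lemma mulq_inj : injective mulq.
Proof.
by apply: (can_inj (g := iter m.-1 mulq)) => i; rewrite -iterSr prednK // iter_mulq_m.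
Qed.

Lemma order_mulq_dvdn i : order mulq i %| m.
Proof. by rewrite order_dvdn_iter ?iter_mulq_m //; apply: mulq_inj. Qed.

Lemma Bm_card_froots : Bm q m n = #|[set r | froots mulq r & order mulq r == m]|.
Proof.
have froots_sym := fconnect_sym mulq_inj.
have classes_m : [set C in [set cyclo_class q s | s : 'I_n] | #|C| == m] =
                 @cyclo_class q n @: [set r | froots mulq r & order mulq r == m].
  apply/setP => C; rewrite !inE; apply/andP/imsetP => [[/imsetP[s _ ->]] | [r]].
    rewrite card_cyclo_class => /eqP order_s; exists (froot mulq s).
      rewrite inE roots_root //= -order_s.
      by rewrite (eq_order_fconnect mulq_inj (connect_root _ s)).
    rewrite !cyclo_classE; apply/setP => i.
    by rewrite !inE (same_connect froots_sym (connect_root _ s)).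
  by rewrite inE => /andP[_ order_r] ->; rewrite imset_f ?card_cyclo_class.
rewrite /Bm classes_m card_in_imset // => r1 r2.
rewrite !inE => /andP[/eqP r1_root _] /andP[/eqP r2_root _].
move/setP/(_ r2); rewrite !cyclo_classE !inE connect0 => /(fingraph.rootP froots_sym).
by rewrite r1_root r2_root.
Qed.

Lemma card_order_set_mulq : #|order_set mulq m| = Bm q m n * m.
Proof. by rewrite Bm_card_froots card_order_set_froots //; apply: mulq_inj. Qed.

Lemma card_order_mulq_dvdn r : q ^ r - 1 %| n ->
  #|[pred i | order mulq i %| r]| = q ^ r - 1.
Proof.
case/dvdnP=> K n_def; have qr_gt0 : 0 < q ^ r by rewrite expn_gt0 ltnW.
have n_gt0 : 0 < n.
  by apply: dvdn_gt0 n_dvd; rewrite subn_gt0 -(expn0 q) ltn_exp2l.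
have [K_gt0 Q_gt0] : 0 < K /\ 0 < q ^ r - 1.
  by apply/andP; rewrite -muln_gt0 -n_def.
rewrite -(card_dvdn_ord K_gt0 n_def); apply: eq_card => i; rewrite !inE.
rewrite order_dvdn_iter; last exact: mulq_inj.
rewrite -val_eqE /= iter_mulq -{2}(modn_small (ltn_ord i)) eqn_mod_dvd ?leq_pmulr //.
by rewrite -[in X in _ - X](muln1 i) -mulnBr -[RHS](dvdn_pmul2r Q_gt0) -n_def.
Qed.

Variable L : finFieldType.
Hypothesis card_L : #|L| = q ^ m.

Lemma frobenius_mod (y : L) k : (y ^+ (q ^ k) = y ^+ (q ^ (k %% m)))%R.
Proof.
rewrite {1}(divn_eq k m); elim: (k %/ m) => [|c IHc]; first by rewrite add0n.
by rewrite mulSn -addnA expnD exprM -card_L expf_card IHc.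
Qed.

Lemma prim_root_frobenius_fixed (a : L) d : (q ^ m - 1).-primitive_root%R a ->
  (a ^+ (q ^ d) == a)%R = (m %| d).
Proof.
move=> prim_a; have qe_gt0 : 0 < q ^ (d %% m) by rewrite expn_gt0 ltnW.
rewrite frobenius_mod -[X in (_ == X)%R]expr1 (eq_prim_root_expr prim_a) eqn_mod_dvd //.
rewrite -[m %| d]/(d %% m == 0); have [-> | e_gt0] := posnP (d %% m).
  by rewrite subnn dvdn0.
have qe_gt1 : 1 < q ^ (d %% m) by rewrite -(expn0 q) ltn_exp2l.
have qe_lt : q ^ (d %% m) < q ^ m by rewrite ltn_exp2l // ltn_pmod.
by rewrite gtnNdvd //; lia.
Qed.

Lemma Fcode_mulq f i : f \in Fcode L q n -> f (mulq i) = (f i ^+ q)%R.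
Proof. by rewrite inE => /forallP/(_ i)/forallP/(_ (mulq i))/implyP/(_ (eqxx _))/eqP. Qed.

Lemma Fcode_iter f k i : f \in Fcode L q n -> f (iter k mulq i) = (f i ^+ (q ^ k))%R.
Proof.
move=> f_in; elim: k => [|k IHk]; first by rewrite expr1.
by rewrite iterS Fcode_mulq // IHk -exprM expnSr.
Qed.

Definition Fcode_near (x : {ffun 'I_n -> L}) : {ffun 'I_n -> L} :=
  [ffun i => if order mulq i == m
             then x (froot mulq i) ^+ (q ^ findex mulq (froot mulq i) i)
             else 0]%R.

Lemma Fcode_near_in x : Fcode_near x \in Fcode L q n.
Proof.
rewrite inE; apply/forallP => i; apply/forallP => j; apply/implyP => /eqP j_def.
have -> : j = mulq i by apply: ord_inj.
rewrite !ffunE order_f ?froot_f; try exact: mulq_inj.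
case: ifP => [/eqP order_i | _]; last by rewrite expr0n gtn_eqF // ltnW.
set r := froot mulq i; have r_to_i : fconnect mulq r i.
  by rewrite fconnect_sym; [exact: connect_root | exact: mulq_inj].
have r_to_qi : fconnect mulq r (mulq i) := connect_trans r_to_i (fconnect1 _ i).
have iter_qi : iter (findex mulq r i).+1 mulq r = mulq i by rewrite iterS iter_findex.
move/eqP: (etrans (iter_findex r_to_qi) (esym iter_qi)).
rewrite eq_iter_order; last exact: mulq_inj.
rewrite (eq_order_fconnect mulq_inj r_to_i) order_i => /eqP findex_qi.
by rewrite -exprM -expnSr frobenius_mod findex_qi -frobenius_mod.
Qed.

Lemma hamming_Fcode_near x : hamming x (Fcode_near x) <= n - Bm q m n.
Proof.
set S := [set r | froots mulq r & order mulq r == m].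
have := cardsC S; rewrite card_ord => card_S.
rewrite Bm_card_froots -[X in _ <= X - _]card_S addKn /hamming; apply: subset_leq_card.
apply/subsetP => i; rewrite !inE; apply: contraNN => /andP[/eqP root_i order_i].
by rewrite ffunE order_i root_i findex0 expr1.
Qed.

Section PrimitiveRootAgreement.
Variables (a : L) (f : {ffun 'I_n -> L}).
Hypotheses (prim_a : (q ^ m - 1).-primitive_root%R a) (f_in : f \in Fcode L q n).

Lemma Fcode_prim_root_order i : f i = a -> order mulq i = m.
Proof.
move=> fi_a; apply/eqP; rewrite eqn_dvd order_mulq_dvdn.
rewrite -(prim_root_frobenius_fixed _ prim_a).
by rewrite -fi_a -Fcode_iter // (iter_order mulq_inj) eqxx.
Qed.

Lemma Fcode_prim_root_froot_inj : {in [set i | f i == a] &, injective (froot mulq)}.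
Proof.
move=> i j; rewrite !inE => /eqP fi_a /eqP fj_a.
move/(fingraph.rootP (fconnect_sym mulq_inj)) => i_to_j.
have findex_lt := findex_max i_to_j; rewrite Fcode_prim_root_order // in findex_lt.
have /eqP := fj_a; rewrite -(iter_findex i_to_j) Fcode_iter // fi_a.
by rewrite prim_root_frobenius_fixed // /dvdn modn_small // => /eqP ->.
Qed.

Lemma hamming_prim_root_Fcode : n - Bm q m n <= hamming [ffun=> a] f.
Proof.
set A := [set i | f i == a]; have := cardsC A; rewrite card_ord => card_A_split.
have -> : hamming [ffun=> a] f = #|~: A|.
  by apply: eq_card => i; rewrite !inE ffunE eq_sym.
suff : #|A| <= Bm q m n by lia.
rewrite Bm_card_froots -(card_in_imset Fcode_prim_root_froot_inj).
apply/subset_leq_card/subsetP => r /imsetP[i]; rewrite !inE => /eqP fi_a ->.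
rewrite roots_root /=; last exact: fconnect_sym mulq_inj.
by rewrite -(eq_order_fconnect mulq_inj (connect_root _ i)) Fcode_prim_root_order.
Qed.

End PrimitiveRootAgreement.

Theorem covering_radius_Fcode : covering_radius (Fcode L q n) = n - Bm q m n.
Proof.
have [a prim_a] := finField_prim_root L; rewrite card_L -subn1 in prim_a.
apply/eqP; rewrite eqn_leq; apply/andP; split.
  apply: covering_radius_le => x.
  by exists (Fcode_near x); [exact: Fcode_near_in | exact: hamming_Fcode_near].
apply: (covering_radius_ge (x := [ffun=> a])) => [|f]; first exact: leq_subr.
exact: hamming_prim_root_Fcode.
Qed.

End MultiplicationByQ.

Theorem theorem10p3 (L : finFieldType) (q m : nat)
  (hq : exists p k : nat, [/\ prime p, (0 < k)%N & q = p ^ k])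
  (hm : (0 < m)%N) (hL : #|L| = (q ^ m)%N) :
  (forall n : nat, (n %| q ^ m - 1)%N ->
     covering_radius (Fcode L q n) = (n - Bm q m n)%N)
  /\
  ((Bm q m (q ^ m - 1))%:R : rat) =
    ((m%:R)^-1 * \sum_(r <- divisors m)
                    (mobius (m %/ r))%:~R * ((q ^ r - 1)%N)%:R)%R.
Proof.
have q_gt1 : 1 < q.
  by case: hq => p [k [p_pr k_gt0 ->]]; rewrite -(expn0 p) ltn_exp2l ?prime_gt1.
split=> [n n_dvd | ]; first exact: covering_radius_Fcode.
set N := q ^ m - 1; have N_dvd := dvdnn N.
have sum_orders r : r \in divisors m ->
    (\sum_(d <- divisors r) #|order_set (@mulq q N) d|%:R = (q ^ r - 1)%:R :> rat)%R.
  rewrite -dvdn_divisors // => r_dvd_m.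
  rewrite -natr_sum sum_card_order_set ?(dvdn_gt0 hm r_dvd_m) //.
  rewrite (card_order_mulq_dvdn q_gt1 hm N_dvd) // /N -(divnK r_dvd_m) mulnC expnM.
  by rewrite !subn1 dvdn_pred_predX.
rewrite (eq_big_seq (fun r => (mobius (m %/ r))%:~R *
           \sum_(d <- divisors r) #|order_set (@mulq q N) d|%:R))%R; last first.
  by move=> r /sum_orders ->.
rewrite mobius_inversion // card_order_set_mulq // natrM [((Bm _ _ _)%:R * _)%R]mulrC.
by rewrite mulKf // pnatr_eq0 -lt0n.
Qed.
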